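(* Let $n\in\mathbb{N}_{\ge1}$ and $r',P>1$. There exists a self-attention layer $\mathcal F^{(max)}_{SA}:\mathbb{R}^{3\times n}\to\mathbb{R}^{3\times n}$ with head number $1$, head size $3$ and weight bound $\frac12\log(8n^{3/2}r'P)$ such that for any $\boldsymbol x=(x_1,\dots,x_n)\in\mathbb{R}^{1\times n}$ satisfying $|x_i|\le2r'$ for all $i\in[n]$ and $x_i\le x_{\max}-2$ for every $i$ with $x_i\ne x_{\max}$ (where $x_{\max}=\max_ix_i$), $$\mathcal F^{(max)}_{SA}\begin{pmatrix}\boldsymbol x\\ \boldsymbol 1_{1\times n}\\ \boldsymbol 0_{1\times n}\end{pmatrix}=\begin{pmatrix}\boldsymbol x\\ \boldsymbol 1_{1\times n}\\ \widetilde x_{\max}\boldsymbol 1_{1\times n}\end{pmatrix}$$ for some $\widetilde x_{\max}$ with $x_{\max}-\frac{1}{2P\sqrt n}\le\widetilde x_{\max}\le x_{\max}$. In particular, $\mathcal F^{(max)}_{SA}$ maps $\begin{pmatrix}\boldsymbol 0_{1\times n}\\ \boldsymbol 1_{1\times n}\\ \boldsymbol 0_{1\times n}\end{pmatrix}$ to itself.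
   Context: A self-attention layer on $\mathbb{R}^{D\times n}$ with head number $H$ and head size $S$ is $X\mapsto X+\sum_{h=1}^HW_O^{(h)}W_V^{(h)}X\sigma_S(X^\top W_K^{(h)\top}W_Q^{(h)}X)$ with $W_O^{(h)}\in\mathbb{R}^{D\times S}$, $W_V^{(h)},W_K^{(h)},W_Q^{(h)}\in\mathbb{R}^{S\times D}$, where $\sigma_S$ is the column-wise softmax $[\sigma_S(\boldsymbol z)]_i=e^{z_i}/\sum_je^{z_j}$. Its weight bound is the maximum absolute value of the entries of all these matrices. *)

From HB Require Import structures.
From mathcomp Require Import all_boot all_order all_algebra.
From mathcomp Require Import all_classical all_reals all_analysis.
Set Implicit Arguments. Unset Strict Implicit. Unset Printing Implicit Defensive.
Import Order.TTheory GRing.Theory Num.Theory.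
Local Open Scope ring_scope.

Definition softmax_col (R : realType) (n : nat) (Z : 'M[R]_n) : 'M[R]_n :=
  \matrix_(i < n, j < n) (expR (Z i j) / \sum_(k < n) expR (Z k j)).

Definition self_attn (R : realType) (D n H S : nat)
  (WO : 'I_H -> 'M[R]_(D, S)) (WV WK WQ : 'I_H -> 'M[R]_(S, D))
  (X : 'M[R]_(D, n)) : 'M[R]_(D, n) :=
  X + \sum_(h < H) (WO h *m WV h *m X *m
                    softmax_col (X^T *m (WK h)^T *m WQ h *m X)).

Definition weight_bounded (R : realType) (D H S : nat)
  (WO : 'I_H -> 'M[R]_(D, S)) (WV WK WQ : 'I_H -> 'M[R]_(S, D)) (B : R) : Prop :=
  (forall h i j, `|WO h i j| <= B) /\ (forall h i j, `|WV h i j| <= B) /\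
  (forall h i j, `|WK h i j| <= B) /\ (forall h i j, `|WQ h i j| <= B).

Definition stack3 (R : realType) (n : nat) (a b c : 'rV[R]_n) : 'M[R]_(3, n) :=
  \matrix_(i < 3, j < n)
    (if (i : nat) == 0%N then a 0 j else if (i : nat) == 1%N then b 0 j else c 0 j).

From HB Require Import structures.
From mathcomp Require Import all_boot all_order all_algebra.
From mathcomp Require Import all_classical all_reals all_analysis.
From mathcomp Require Import ring lra.
Set Implicit Arguments. Unset Strict Implicit. Unset Printing Implicit Defensive.
Import Order.TTheory GRing.Theory Num.Theory.
Local Open Scope ring_scope.

(* Choose the value weights to copy the row x into the third row, and the
   query/key weights to make every column of scores equal to B x. Each entry of
   the new third row is then the softmax average of x at inverse temperature
   B. Since the non-maximal entries lie at least 2 below x_max and all entries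
   lie within 4 r' of it, that average misses x_max by at most n 4 r' exp(-2B);
   the choice B = ln(8 n^{3/2} r' P) / 2 makes this 1 / (2 P sqrt n). *)

Lemma expR_le_inv1B (R : realType) (x : R) : x < 1 -> expR x <= (1 - x)^-1.
Proof.
move=> x_lt1; rewrite -[expR x]invrK lef_pV2 ?posrE ?invr_gt0 ?expR_gt0 ?subr_gt0 //.
by rewrite -expRN; exact: expR_ge1Dx.
Qed.

Lemma ln8_ge (R : realType) : 4 / 3 <= ln (8 : R).
Proof.
rewrite -ler_expR lnK ?posrE // expRM_natl.
have e13 : expR (3^-1 : R) <= 3 / 2.
  have third_lt1 : (3^-1 : R) < 1 by lra.
  apply: le_trans (expR_le_inv1B third_lt1) _.
  by have -> : (1 - 3^-1 : R)^-1 = 3 / 2 by field.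
apply: le_trans (_ : (3 / 2) ^+ 4 <= _).
  by rewrite lerXn2r ?nnegrE ?expR_ge0 //; lra.
have -> : (3 / 2 : R) ^+ 4 = 81 / 16 by field.
lra.
Qed.

Section SoftmaxMean.
Variables (R : realType) (n : nat).
Implicit Types (B g d : R) (x : 'rV[R]_n).

Definition softmax_weight B x (k : 'I_n) : R :=
  expR (B * x 0 k) / \sum_(l < n) expR (B * x 0 l).

Definition softmax_mean B x : R := \sum_(k < n) x 0 k * softmax_weight B x k.

Lemma softmax_weight_ge0 B x k : 0 <= softmax_weight B x k.
Proof. by rewrite divr_ge0 ?expR_ge0 ?sumr_ge0 // => l _; rewrite expR_ge0. Qed.

Lemma expR_le_softmax_denom B x (i : 'I_n) :
  expR (B * x 0 i) <= \sum_(l < n) expR (B * x 0 l).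
Proof. by rewrite (bigD1 i) //= lerDl sumr_ge0 // => l _; rewrite expR_ge0. Qed.

Lemma softmax_denom_gt0 B x (i : 'I_n) : 0 < \sum_(l < n) expR (B * x 0 l).
Proof. exact: lt_le_trans (expR_gt0 _) (expR_le_softmax_denom B x i). Qed.

Lemma softmax_weight_le B x (i k : 'I_n) :
  softmax_weight B x k <= expR (B * (x 0 k - x 0 i)).
Proof.
rewrite mulrBr expRB ler_wpM2l ?expR_ge0 //.
by rewrite lef_pV2 ?posrE ?expR_gt0 ?(softmax_denom_gt0 B x i) ?expR_le_softmax_denom.
Qed.

Lemma sum_softmax_weight B x : (0 < n)%N -> \sum_k softmax_weight B x k = 1.
Proof.
by move=> n_gt0; rewrite -mulr_suml mulfV // gt_eqF // (softmax_denom_gt0 B x (Ordinal n_gt0)).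
Qed.

Lemma softmax_mean_gap B x m : (0 < n)%N ->
  m - softmax_mean B x = \sum_k (m - x 0 k) * softmax_weight B x k.
Proof.
move=> n_gt0; rewrite -{1}[m]mulr1 -(sum_softmax_weight B x n_gt0) mulr_sumr -sumrB.
by apply: eq_bigr => k _; rewrite mulrBl.
Qed.

Lemma softmax_mean_le B x m : (0 < n)%N -> (forall k, x 0 k <= m) ->
  softmax_mean B x <= m.
Proof.
move=> n_gt0 x_le; rewrite -subr_ge0 (softmax_mean_gap _ _ _ n_gt0).
by rewrite sumr_ge0 // => k _; rewrite mulr_ge0 ?softmax_weight_ge0 ?subr_ge0.
Qed.

(* Entries at the maximum contribute nothing to the gap; every other entry is
   at least g below it, so its softmax weight is at most exp(-g B). *)
Lemma softmax_mean_ge B g d x (i : 'I_n) : 0 <= B ->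
  (forall k, x 0 k <= x 0 i) ->
  (forall k, x 0 k != x 0 i -> x 0 k <= x 0 i - g) ->
  (forall k, x 0 i - x 0 k <= d) ->
  x 0 i - softmax_mean B x <= (d * expR (- (g * B))) *+ n.
Proof.
move=> B_ge0 x_le x_gap x_spread.
have d_ge0 : 0 <= d by have := x_spread i; rewrite subrr.
rewrite (softmax_mean_gap _ _ _ (leq_ltn_trans (leq0n _) (ltn_ord i))).
rewrite -[X in _ <= _ *+ X]card_ord -sumr_const ler_sum // => k _.
have [-> | x_ne] := eqVneq (x 0 k) (x 0 i); first by rewrite subrr mul0r mulr_ge0 ?expR_ge0.
apply: ler_pM; rewrite ?subr_ge0 ?softmax_weight_ge0 //.
apply: le_trans (softmax_weight_le B x i k) _; rewrite ler_expR.
have := x_gap k x_ne; nra.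
Qed.

End SoftmaxMean.

Lemma big_ord3 (V : nmodType) (F : 'I_3 -> V) : \sum_(i < 3) F i = F 0 + F 1 + F 2.
Proof.
by rewrite !big_ord_recl big_ord0 addr0 addrA; congr (F _ + F _ + F _); apply: val_inj.
Qed.

Section MaxAttention.
Variables (R : realType) (n : nat) (B : R).

(* W_O W_V has the single nonzero entry (2,0) equal to 3 * 1/2 * 2/3 = 1, and
   W_K^T W_Q the single nonzero entry (0,1) equal to 3 * B * 1/3 = B. *)
Definition max_WO : 'M[R]_3 := \matrix_(a, b) (if a == 2 :> nat then 2^-1 else 0).
Definition max_WV : 'M[R]_3 := \matrix_(a, b) (if b == 0 :> nat then 2 / 3 else 0).
Definition max_WK : 'M[R]_3 := \matrix_(a, b) (if b == 0 :> nat then B else 0).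
Definition max_WQ : 'M[R]_3 := \matrix_(a, b) (if b == 1 :> nat then 3^-1 else 0).

Lemma max_weight_bounded : 2 / 3 <= B ->
  weight_bounded (fun _ : 'I_1 => max_WO) (fun _ => max_WV) (fun _ => max_WK)
    (fun _ => max_WQ) B.
Proof.
move=> B_ge; do ![split] => _ a b; rewrite !mxE;
  case: ifP => _; rewrite ?normr0 ?ger0_norm; lra.
Qed.

Lemma max_scoresE (x : 'rV[R]_n) :
  (stack3 x (const_mx 1) 0)^T *m max_WK^T *m max_WQ *m stack3 x (const_mx 1) 0
  = \matrix_(k, j) (B * x 0 k).
Proof. by apply/matrixP => k j; rewrite !(big_ord3, mxE) /=; lra. Qed.

Lemma max_valuesE (x : 'rV[R]_n) :
  max_WO *m max_WV *m stack3 x (const_mx 1) 0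
  = \matrix_(i, k) (if i == 2 :> nat then x 0 k else 0).
Proof.
by apply/matrixP => -[[|[|[|i]]] i_lt3] k //; rewrite !(big_ord3, mxE) /=; lra.
Qed.

Lemma self_attn_maxE (x : 'rV[R]_n) :
  self_attn (fun _ : 'I_1 => max_WO) (fun _ => max_WV) (fun _ => max_WK)
    (fun _ => max_WQ) (stack3 x (const_mx 1) 0)
  = stack3 x (const_mx 1) (const_mx (softmax_mean B x)).
Proof.
rewrite /self_attn big_ord1 max_scoresE max_valuesE.
apply/matrixP => -[[|[|[|i]]] i_lt3] j //; rewrite !mxE.
- by rewrite big1 ?addr0 // => k _; rewrite !mxE mul0r.
- by rewrite big1 ?addr0 // => k _; rewrite !mxE mul0r.
rewrite add0r; apply: eq_bigr => k _; rewrite !mxE; congr (_ * (_ / _)).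
by apply: eq_bigr => l _; rewrite mxE.
Qed.

End MaxAttention.

Theorem lemma18 (R : realType) (n : nat) (r' P : R) :
  (1 <= n)%N -> 1 < r' -> 1 < P ->
  exists (WO : 'I_1 -> 'M[R]_(3, 3)) (WV WK WQ : 'I_1 -> 'M[R]_(3, 3)),
    weight_bounded WO WV WK WQ
      (2^-1 * ln (8 * (n%:R * Num.sqrt (n%:R)) * r' * P)) /\
    (forall (x : 'rV[R]_n) (xmax : R),
       (exists i, x 0 i = xmax) -> (forall i, x 0 i <= xmax) ->
       (forall i, `|x 0 i| <= 2 * r') ->
       (forall i, x 0 i != xmax -> x 0 i <= xmax - 2) ->
       exists xt : R,
         self_attn WO WV WK WQ (stack3 x (const_mx 1) 0)
           = stack3 x (const_mx 1) (const_mx xt) /\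
         xmax - (2 * P * Num.sqrt (n%:R))^-1 <= xt /\ xt <= xmax) /\
    self_attn WO WV WK WQ (stack3 (0 : 'rV[R]_n) (const_mx 1) 0)
      = stack3 (0 : 'rV[R]_n) (const_mx 1) 0.
Proof.
move=> n_gt0 r'_gt1 P_gt1.
set s := Num.sqrt (n%:R : R); set A := 8 * (n%:R * s) * r' * P; set B := 2^-1 * ln A.
have n_ge1 : 1 <= n%:R :> R by rewrite ler1n.
have s_ge1 : 1 <= s by rewrite -sqrtr1 ler_sqrt.
have s2 : s ^+ 2 = n%:R by rewrite sqr_sqrtr ?ler0n.
have A_ge8 : 8 <= A.
  have ns_ge1 : 1 <= n%:R * s by nra.
  have nsr_ge1 : 1 <= n%:R * s * r' by nra.
  by rewrite /A -!mulrA; nra.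
have B_ge : 2 / 3 <= B.
  have : ln 8 <= ln A by rewrite ler_ln ?posrE //; lra.
  by have := ln8_ge R; rewrite /B; lra.
have expNB : expR (- (2 * B)) = A^-1.
  by rewrite expRN /B mulrA divff ?mul1r ?lnK ?posrE //; lra.
exists (fun _ => max_WO R), (fun _ => max_WV R), (fun _ => max_WK B), (fun _ => max_WQ R).
split; first exact: max_weight_bounded.
split; last first.
  by rewrite self_attn_maxE /softmax_mean big1 // => k _; rewrite mxE mul0r.
move=> x xmax [i <-] x_le x_abs x_gap.
exists (softmax_mean B x); split; first exact: self_attn_maxE.
split; last exact: softmax_mean_le.
have x_spread k : x 0 i - x 0 k <= 4 * r'.
  by move: (x_abs i) (x_abs k); rewrite !ler_norml => /andP[? ?] /andP[? ?]; lra.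
have B_ge0 : 0 <= B by lra.
have := softmax_mean_ge B_ge0 x_le x_gap x_spread.
suff -> : (4 * r' * expR (- (2 * B))) *+ n = (2 * P * s)^-1 by lra.
rewrite expNB -mulr_natr /A -s2; field.
by rewrite !gt_eqF //; lra.
Qed.
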